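(* Let $A$ be a ring. The Krull valuation spectrum $\mathrm{Spev}(A)$ embeds in $\mathrm{Speh}^m(A)$, and as a subset of $\mathrm{Speh}^m(A)$ it is $$\mathrm{Spev}(A)=\{x\in\mathrm{Speh}^m(A):|2(x)|\le1\}=\{x\in\mathrm{Speh}^m(A):|n(x)|\le1\text{ for all }n\in\mathbb{N}\}.$$
   Context: A halo is a commutative unital semiring with a partial order compatible with $+$ and $\cdot$; an aura is a halo whose semiring is a semifield; positive means $0<1$. A generalized seminorm on a ring $A$ is a map $|\cdot|:A\to R$ into a positive totally ordered aura with $|0|=0,|1|=1$, $|a+b|\le|a|+|b|$, $|ab|\le|a||b|$; multiplicative if $|ab|=|a||b|$; tempered if $R$ has tempered growth (for every non-zero $P\in\mathbb{N}[X]$ and $x\in R$, $x^n\le P(n)$ for all $n$ implies $x\le1$). Two seminorms $|\cdot|_1,|\cdot|_2$ on $A$ are multiplicatively equivalent if for all $a,b,c$: $|a|_1|c|_1\le|b|_1\iff|a|_2|c|_2\le|b|_2$; they are equivalent if $|a|_1\le|b|_1\iff|a|_2\le|b|_2$. A place is a multiplicative equivalence class of seminorms; $\mathrm{Speh}^m(A)$ is the set of tempered multiplicative places, and for $x$ a place, $|a(x)|$ denotes $|a|$ for a chosen representative. For a totally ordered group $\Gamma$, $R_\Gamma=\{0\}\cup\Gamma$ with $0$ smallest and absorbing and $a+b=\max(a,b)$. $\mathrm{Spev}(A)$ is the set of equivalence classes of Krull valuations, i.e. multiplicative seminorms $A\to R_\Gamma$. *)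

From Stdlib Require Import ClassicalEpsilon.
From mathcomp Require Import all_boot all_algebra.
Set Implicit Arguments. Unset Strict Implicit. Unset Printing Implicit Defensive.
Import GRing.Theory.
Local Open Scope ring_scope.

Record auraOps := AuraOps {
  acar :> Type;
  a0 : acar;
  a1 : acar;
  aadd : acar -> acar -> acar;
  amul : acar -> acar -> acar;
  ale : acar -> acar -> Prop }.

Section Aura.
Variable R : auraOps.
Local Notation "x +' y" := (aadd x y) (at level 50, left associativity).
Local Notation "x *' y" := (amul x y) (at level 40, left associativity).
Local Notation "x <=' y" := (ale x y) (at level 70).

Definition is_halo : Prop :=
  (forall x y z : R, x +' (y +' z) = (x +' y) +' z) /\
      (forall x y : R, x +' y = y +' x) /\
      (forall x : R, a0 R +' x = x) /\
      (forall x y z : R, x *' (y *' z) = (x *' y) *' z) /\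
      (forall x y : R, x *' y = y *' x) /\
      (forall x : R, a1 R *' x = x) /\
      (forall x y z : R, x *' (y +' z) = (x *' y) +' (x *' z)) /\
      (forall x : R, a0 R *' x = a0 R) /\
      ((forall x : R, x <=' x) /\
       (forall x y : R, x <=' y -> y <=' x -> x = y) /\
       (forall x y z : R, x <=' y -> y <=' z -> x <=' z) /\
       (forall x y z : R, x <=' y -> x +' z <=' y +' z) /\
       (forall x y z : R, x <=' y -> x *' z <=' y *' z)).

Definition is_aura : Prop :=
  is_halo /\ forall x : R, x <> a0 R -> exists y : R, x *' y = a1 R.

Definition is_positive : Prop := a0 R <=' a1 R /\ a0 R <> a1 R.

Definition is_totally_ordered : Prop := forall x y : R, x <=' y \/ y <=' x.

Fixpoint natR (n : nat) : R :=
  match n with O => a0 R | S m => natR m +' a1 R end.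

Fixpoint powR (x : R) (n : nat) : R :=
  match n with O => a1 R | S m => powR x m *' x end.

(* tempered growth; P(n) for P in N[X] is computed in N and mapped to R *)
Definition tempered_growth : Prop :=
  forall (P : {poly nat}) (x : R), P != 0 ->
    (forall n : nat, powR x n <=' natR P.[n]) -> x <=' a1 R.

Definition pt_aura : Prop := [/\ is_aura, is_positive & is_totally_ordered].
End Aura.

Section Seminorm.
Variable A : comPzRingType.

Definition gseminorm (R : auraOps) (f : A -> R) : Prop :=
  [/\ pt_aura R, f 0 = a0 R, f 1 = a1 R,
      (forall a b, ale (f (a + b)) (aadd (f a) (f b))) &
      (forall a b, ale (f (a * b)) (amul (f a) (f b)))].

Definition multiplicative (R : auraOps) (f : A -> R) : Prop :=
  forall a b, f (a * b) = amul (f a) (f b).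

(* representative of a point of Speh^m(A) *)
Definition tempered_mult_seminorm (R : auraOps) (f : A -> R) : Prop :=
  [/\ gseminorm f, multiplicative f & tempered_growth R].

Definition mult_equiv (R1 R2 : auraOps) (f1 : A -> R1) (f2 : A -> R2) : Prop :=
  forall a b c, ale (amul (f1 a) (f1 c)) (f1 b) <-> ale (amul (f2 a) (f2 c)) (f2 b).

Definition seminorm_equiv (R1 R2 : auraOps) (f1 : A -> R1) (f2 : A -> R2) : Prop :=
  forall a b, ale (f1 a) (f1 b) <-> ale (f2 a) (f2 b).
End Seminorm.

Record groupOps := GroupOps {
  gcar :> Type;
  g1 : gcar;
  gmul : gcar -> gcar -> gcar;
  ginv : gcar -> gcar;
  gle : gcar -> gcar -> Prop }.

Definition is_tot_ord_group (G : groupOps) : Prop :=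
  (forall x y z : G, gmul x (gmul y z) = gmul (gmul x y) z) /\
  (forall x y : G, gmul x y = gmul y x) /\
  (forall x : G, gmul (g1 G) x = x) /\
  (forall x : G, gmul (ginv x) x = g1 G) /\
  (forall x : G, gle x x) /\
  (forall x y : G, gle x y -> gle y x -> x = y) /\
  (forall x y z : G, gle x y -> gle y z -> gle x z) /\
  (forall x y : G, gle x y \/ gle y x) /\
  (forall x y z : G, gle x y -> gle (gmul x z) (gmul y z)).

Section RGamma.
Variable G : groupOps.
(* R_Γ = {0} ∪ Γ, with None playing the role of 0 *)
Definition rg_le (x y : option G) : Prop :=
  match x, y with
  | None, _ => True
  | Some _, None => False
  | Some a, Some b => gle a b
  end.
Definition rg_add (x y : option G) : option G :=
  match x, y with
  | None, _ => y
  | _, None => x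
  | Some a, Some b => if excluded_middle_informative (gle a b) then y else x
  end.
Definition rg_mul (x y : option G) : option G :=
  match x, y with
  | Some a, Some b => Some (gmul a b)
  | _, _ => None
  end.
Definition RGamma : auraOps :=
  @AuraOps (option G) None (Some (g1 G)) rg_add rg_mul rg_le.
End RGamma.

(* representative of a point of Spev(A): a Krull valuation *)
Definition krull_valuation (A : comPzRingType) (G : groupOps) (v : A -> RGamma G) : Prop :=
  [/\ is_tot_ord_group G, gseminorm v & multiplicative v].

From Pilot Require Import Defs.
From Stdlib Require Import ClassicalEpsilon ProofIrrelevance.
From mathcomp Require Import all_boot all_algebra.
Set Implicit Arguments. Unset Strict Implicit. Unset Printing Implicit Defensive.
Import GRing.Theory.
Local Open Scope ring_scope.

(* A Krull valuation takes values in the idempotent aura [R_G], where every positive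
   integer has value [1]; hence it has tempered growth and [|2| <= 1], and for
   multiplicative seminorms multiplicative equivalence reduces to equivalence (take [c = 1]).
   Conversely, let [f] be a tempered multiplicative seminorm with [|2| <= 1].  Then
   [|n| <= 1] for every [n]: [|n| ^ k = |n ^ k|] is at most the number [n k + 1] of binary
   digits of [n ^ k], and tempered growth removes a polynomial bound.  Next [f] is
   ultrametric: if [|a| <= |b|], the binomial formula gives [|a + b| ^ n <= (n + 1) |b| ^ n],
   and tempered growth again yields [|a + b| <= |b|].  An ultrametric multiplicative
   seminorm into a totally ordered semifield [R] is then a Krull valuation with value group
   [R \ {0}], multiplicatively equivalent to [f] since it has the same products and order. *)

Section TotOrdGroup.
Variable G : groupOps.
Hypothesis HG : is_tot_ord_group G.

Lemma gmulA (x y z : G) : gmul x (gmul y z) = gmul (gmul x y) z.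
Proof. by case: HG. Qed.
Lemma gmulC (x y : G) : gmul x y = gmul y x.
Proof. by case: HG => _ []. Qed.
Lemma gmul1 (x : G) : gmul (g1 G) x = x.
Proof. by case: HG => _ [_ []]. Qed.
Lemma gmulVg (x : G) : gmul (ginv x) x = g1 G.
Proof. by case: HG => _ [_ [_ []]]. Qed.
Lemma gle_refl (x : G) : gle x x.
Proof. by case: HG => _ [_ [_ [_ [refl _]]]]. Qed.
Lemma gle_anti (x y : G) : gle x y -> gle y x -> x = y.
Proof. by case: HG => _ [_ [_ [_ [_ [anti _]]]]]; apply: anti. Qed.
Lemma gle_trans (x y z : G) : gle x y -> gle y z -> gle x z.
Proof. by case: HG => _ [_ [_ [_ [_ [_ [trans _]]]]]]; apply: trans. Qed.
Lemma gle_total (x y : G) : gle x y \/ gle y x.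
Proof. by case: HG => _ [_ [_ [_ [_ [_ [_ [total _]]]]]]]. Qed.
Lemma gle_mul2r (x y z : G) : gle x y -> gle (gmul x z) (gmul y z).
Proof. by case: HG => _ [_ [_ [_ [_ [_ [_ [_ mon]]]]]]]; apply: mon. Qed.

Lemma gle_mul2l (x y z : G) : gle (gmul z x) (gmul z y) <-> gle x y.
Proof.
split=> [|le_xy]; last by rewrite ![gmul z _]gmulC; apply: gle_mul2r.
have cancel_z w : gmul (gmul z w) (ginv z) = w by rewrite gmulC gmulA gmulVg gmul1.
by move/(gle_mul2r (ginv z)); rewrite !cancel_z.
Qed.

Lemma rg_le_refl (x : RGamma G) : rg_le x x.
Proof. by case: x => //= a; apply: gle_refl. Qed.

Lemma rg_le_trans (x y z : RGamma G) : rg_le x y -> rg_le y z -> rg_le x z.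
Proof. by case: x => [a|]; case: y => [b|]; case: z => [c|] //=; apply: gle_trans. Qed.

Lemma rg_le_total (x y : RGamma G) : rg_le x y \/ rg_le y x.
Proof. by case: x => [a|]; case: y => [b|] /=; auto; apply: gle_total. Qed.

Lemma rg_le_anti (x y : RGamma G) : rg_le x y -> rg_le y x -> x = y.
Proof. by case: x => [a|]; case: y => [b|] //= *; congr Some; apply: gle_anti. Qed.

Lemma rg_le_ext (x y : RGamma G) : (forall z, rg_le x z <-> rg_le y z) -> x = y.
Proof.
by move=> e; apply: rg_le_anti; [apply/e | apply/e]; apply: rg_le_refl.
Qed.

Lemma rg_add_leP (x y z : RGamma G) :
  rg_le (rg_add x y) z <-> rg_le x z /\ rg_le y z.
Proof.
case: x => [a|]; case: y => [b|] /=; try tauto.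
case: excluded_middle_informative => [le_ab | nle_ab] /=.
  by split=> [le_bz | [] //]; split=> //; exact: (@rg_le_trans (Some a) (Some b) z).
have le_ba : gle b a by case: (gle_total a b).
by split=> [le_az | [] //]; split=> //; exact: (@rg_le_trans (Some b) (Some a) z).
Qed.

Lemma rg_le_addl (x y : RGamma G) : rg_le x (rg_add x y).
Proof. by have /rg_add_leP[] := rg_le_refl (rg_add x y). Qed.

Lemma rg_le_addr (x y : RGamma G) : rg_le y (rg_add x y).
Proof. by have /rg_add_leP[] := rg_le_refl (rg_add x y). Qed.

Lemma rg_addA (x y z : RGamma G) : rg_add x (rg_add y z) = rg_add (rg_add x y) z.
Proof. by apply: rg_le_ext => w; rewrite !rg_add_leP; tauto. Qed.

Lemma rg_addC (x y : RGamma G) : rg_add x y = rg_add y x.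
Proof. by apply: rg_le_ext => w; rewrite !rg_add_leP; tauto. Qed.

Lemma rg_le_add2r (x y z : RGamma G) : rg_le x y -> rg_le (rg_add x z) (rg_add y z).
Proof.
move=> le_xy; apply/rg_add_leP; split; last exact: rg_le_addr.
exact: rg_le_trans le_xy (rg_le_addl _ _).
Qed.

Lemma rg_mulDr (x y z : RGamma G) :
  rg_mul x (rg_add y z) = rg_add (rg_mul x y) (rg_mul x z).
Proof.
case: x => [a|]; case: y => [b|]; case: z => [c|] //=.
case: excluded_middle_informative => [le_bc | nle_bc];
  case: excluded_middle_informative => //= le_abc.
- by case: le_abc; apply/gle_mul2l.
- by case: nle_bc; move/gle_mul2l: le_abc.
Qed.

Lemma RGamma_pt_aura : pt_aura (RGamma G).
Proof.
split; [split | by [] | exact: rg_le_total].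
- split; first exact: rg_addA.
  split; first exact: rg_addC.
  split; first by case.
  split; first by case=> [a|]; case=> [b|]; case=> [c|] //=; rewrite gmulA.
  split; first by case=> [a|]; case=> [b|] //=; rewrite gmulC.
  split; first by case=> [a|] //=; rewrite gmul1.
  split; first exact: rg_mulDr.
  split; first by case.
  split; first exact: rg_le_refl.
  split; first exact: rg_le_anti.
  split; first exact: rg_le_trans.
  split; first exact: rg_le_add2r.
  by case=> [a|]; case=> [b|]; case=> [c|] //=; apply: gle_mul2r.
- by case=> [a|] // _; exists (Some (ginv a)); rewrite /= gmulC gmulVg.
Qed.

End TotOrdGroup.

Section PtAura.
Variable R : auraOps.
Hypothesis HR : pt_aura R.
Local Notation "x +' y" := (aadd x y) (at level 50, left associativity).
Local Notation "x *' y" := (amul x y) (at level 40, left associativity).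
Local Notation "x <=' y" := (ale x y) (at level 70).
Local Notation "0'" := (a0 R).
Local Notation "1'" := (a1 R).

Let halo : is_halo R. Proof. by case: HR => [[]]. Qed.
Ltac halo_axiom := move: halo =>
  [addA [addC [add0 [mulA [mulC [mul1 [mulD [mul0 [refl [anti [trans [leD leM]]]]]]]]]]]].

Lemma aaddC (x y : R) : x +' y = y +' x. Proof. by halo_axiom. Qed.
Lemma amulA (x y z : R) : x *' (y *' z) = (x *' y) *' z. Proof. by halo_axiom. Qed.
Lemma amulC (x y : R) : x *' y = y *' x. Proof. by halo_axiom. Qed.
Lemma amul1l (x : R) : 1' *' x = x. Proof. by halo_axiom. Qed.
Lemma amul1r (x : R) : x *' 1' = x. Proof. by rewrite amulC amul1l. Qed.
Lemma amulDl (x y z : R) : (y +' z) *' x = y *' x +' z *' x.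
Proof. by halo_axiom; rewrite mulC mulD !(mulC x). Qed.
Lemma amul0l (x : R) : 0' *' x = 0'. Proof. by halo_axiom. Qed.
Lemma amul0r (x : R) : x *' 0' = 0'. Proof. by rewrite amulC amul0l. Qed.
Lemma ale_refl (x : R) : x <=' x. Proof. by halo_axiom. Qed.
Lemma ale_anti (x y : R) : x <=' y -> y <=' x -> x = y.
Proof. by halo_axiom; apply: anti. Qed.
Lemma ale_trans (x y z : R) : x <=' y -> y <=' z -> x <=' z.
Proof. by halo_axiom; apply: trans. Qed.
Lemma ale_add2r (x y z : R) : x <=' y -> x +' z <=' y +' z.
Proof. by halo_axiom; apply: leD. Qed.
Lemma ale_mul2r (x y z : R) : x <=' y -> x *' z <=' y *' z.
Proof. by halo_axiom; apply: leM. Qed.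
Lemma ale_total (x y : R) : x <=' y \/ y <=' x. Proof. by case: HR. Qed.
Lemma ale01 : 0' <=' 1'. Proof. by case: HR => _ []. Qed.
Lemma a1_neq0 : 1' <> 0'. Proof. by case: HR => _ [_ /nesym]. Qed.
Lemma amul_inv (x : R) : x <> 0' -> exists y, x *' y = 1'.
Proof. by case: HR => [[_ inv]] _ _; apply: inv. Qed.

Lemma ale_mul2l (x y z : R) : x <=' y -> z *' x <=' z *' y.
Proof. by rewrite !(amulC z); apply: ale_mul2r. Qed.
Lemma ale_add (x y z w : R) : x <=' y -> z <=' w -> x +' z <=' y +' w.
Proof.
move=> le_xy le_zw; apply: ale_trans (ale_add2r _ le_xy) _.
by rewrite !(aaddC y); apply: ale_add2r.
Qed.
Lemma ale_mul (x y z w : R) : x <=' y -> z <=' w -> x *' z <=' y *' w.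
Proof. by move=> le_xy le_zw; apply: ale_trans (ale_mul2r _ le_xy) (ale_mul2l _ le_zw). Qed.
Lemma ale0a (x : R) : 0' <=' x.
Proof. by have := ale_mul2r x ale01; rewrite amul0l amul1l. Qed.
Lemma alea0 (x : R) : x <=' 0' -> x = 0'.
Proof. by move=> le_x0; apply: ale_anti le_x0 (ale0a _). Qed.
Lemma amul_neq0 (x y : R) : x <> 0' -> y <> 0' -> x *' y <> 0'.
Proof.
move=> nz_x nz_y xy0; have [x' xx'] := amul_inv nz_x; apply: nz_y.
by rewrite -[y]amul1l -xx' (amulC x) -amulA xy0 amul0r.
Qed.
Lemma amul_eq1_neq0r (x y : R) : x *' y = 1' -> y <> 0'.
Proof. by move=> xy1 y0; apply: a1_neq0; rewrite -xy1 y0 amul0r. Qed.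

Lemma powR_mul (x y : R) n : powR (x *' y) n = powR x n *' powR y n.
Proof.
elim: n => [|n IHn] /=; first by rewrite amul1l.
by rewrite IHn -!amulA; congr amul; rewrite !amulA (amulC x).
Qed.
Lemma powR_add (x : R) m n : powR x (m + n) = powR x m *' powR x n.
Proof. by elim: n => [|n IHn] /=; rewrite ?addn0 ?amul1r // addnS /= IHn amulA. Qed.
Lemma powR1 n : powR 1' n = 1'.
Proof. by elim: n => [|n IHn] //=; rewrite IHn amul1l. Qed.
Lemma powR_le (x y : R) n : x <=' y -> powR x n <=' powR y n.
Proof. by move=> le_xy; elim: n => [|n IHn] /=; [apply: ale_refl | apply: ale_mul]. Qed.

(* Tempered growth, transported from [x <= 1] to [x <= y] by dividing by [y]. *)
Lemma tempered_le (P : {poly nat}) (x y : R) : tempered_growth R -> P != 0 ->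
  (forall n, powR x n <=' natR R P.[n] *' powR y n) -> x <=' y.
Proof.
move=> tempR nzP le_xy.
have [y0|nz_y] := classic (y = 0').
  by have := le_xy 1%N; rewrite /= y0 !amul1l amul0r.
have [y' yy'] := amul_inv nz_y.
have le_xy'1 : x *' y' <=' 1'.
  apply: (tempR P _ nzP) => n.
  rewrite powR_mul -[natR R _]amul1r -(powR1 n) -yy' powR_mul amulA.
  exact: ale_mul2r.
by have := ale_mul2r y le_xy'1; rewrite amul1l -amulA (amulC y') yy' amul1r.
Qed.

End PtAura.

Section TemperedMultSeminorm.
Variables (R : auraOps) (A : comPzRingType) (f : A -> R).
Hypothesis Hf : tempered_mult_seminorm f.
Local Notation "x +' y" := (aadd x y) (at level 50, left associativity).
Local Notation "x *' y" := (amul x y) (at level 40, left associativity).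
Local Notation "x <=' y" := (ale x y) (at level 70).
Local Notation "1'" := (a1 R).

Lemma seminorm_pt_aura : pt_aura R. Proof. by case: Hf => [[]]. Qed.
Let HR := seminorm_pt_aura.

Lemma norm0 : f 0 = a0 R. Proof. by case: Hf => [[]]. Qed.
Lemma norm1 : f 1 = 1'. Proof. by case: Hf => [[]]. Qed.
Lemma normD a b : f (a + b) <=' f a +' f b. Proof. by case: Hf => [[]]. Qed.
Lemma normM a b : f (a * b) = f a *' f b. Proof. by case: Hf. Qed.
Lemma normX a n : f (a ^+ n) = powR (f a) n.
Proof. by elim: n => [|n IHn] /=; rewrite ?expr0 ?norm1 // exprSr normM IHn. Qed.

Hypothesis norm2_le1 : f 2%:R <=' 1'.

(* Induction on the binary digits of [m], as [m = 2 (m %/ 2) + m %% 2]. *)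
Lemma norm_natr_le_natR k m : (m < 2 ^ k)%N -> f m%:R <=' natR R k.
Proof.
elim: k m => [|k IHk] m lt_m.
  by move: lt_m; rewrite expn0 ltnS leqn0 => /eqP ->; rewrite norm0; apply: ale_refl.
rewrite (divn_eq m 2) natrD natrM /=; apply: (ale_trans HR (normD _ _)).
apply: (ale_add HR).
  rewrite normM -[natR R k](amul1r HR); apply: (ale_mul HR _ norm2_le1).
  by apply: IHk; rewrite ltn_divLR // -expnSr.
have : (m %% 2 < 2)%N by rewrite ltn_mod.
by case: (m %% 2)%N => [|[|//]] _; rewrite ?norm0 ?norm1; [apply: ale01 | apply: ale_refl].
Qed.

(* [f n ^ k = f (n ^ k) <= n k + 1], as [n ^ k] has at most [n k + 1] binary digits. *)
Lemma norm_natr_le1 n : f n%:R <=' 1'.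
Proof.
apply: (tempered_le HR (P := n%:P * 'X + 1%:P)); first by case: Hf.
  apply/eqP => /(congr1 (horner^~ 0%N)).
  by rewrite hornerMXaddC hornerC horner0 mulr0 add0r.
move=> k; rewrite (powR1 HR) (amul1r HR) -normX -natrX hornerMXaddC hornerC.
apply: norm_natr_le_natR; change (n ^ k < 2 ^ (n * k + 1))%N.
apply: (@leq_ltn_trans (2 ^ (n * k))); last by rewrite ltn_exp2l // addn1.
rewrite expnM; case: k => [|k]; first by rewrite !expn0.
by rewrite leq_exp2r // ltnW // ltn_expl.
Qed.

Lemma norm_sum_le m (F : 'I_m -> A) B :
  (forall i, f (F i) <=' B) -> f (\sum_(i < m) F i) <=' natR R m *' B.
Proof.
elim: m F => [|m IHm] F le_FB.
  by rewrite big_ord0 norm0 /= (amul0l HR); apply: ale_refl.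
rewrite big_ord_recr /= (amulDl HR) (amul1l HR); apply: (ale_trans HR (normD _ _)).
by apply: (ale_add HR) => //; apply: IHm.
Qed.

Lemma norm_mulrn_le a k : f (a *+ k) <=' f a.
Proof.
rewrite -mulr_natr normM -{2}[f a](amul1r HR).
exact: (ale_mul2l HR _ (norm_natr_le1 _)).
Qed.

Lemma norm_exprD_le a b n : f a <=' f b ->
  f ((a + b) ^+ n) <=' natR R n.+1 *' powR (f b) n.
Proof.
move=> le_ab; rewrite exprDn; apply: norm_sum_le => i.
apply: (ale_trans HR (norm_mulrn_le _ _)); rewrite normM !normX.
have -> : powR (f b) n = powR (f b) (n - i) *' powR (f b) i.
  by rewrite -(powR_add HR) subnK // -ltnS.
exact: (ale_mul2r HR _ (powR_le HR _ le_ab)).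
Qed.

Lemma norm_add_le a b : f a <=' f b -> f (a + b) <=' f b.
Proof.
move=> le_ab; apply: (tempered_le HR (P := 'X + 1%:P)); first by case: Hf.
  by apply/eqP => /(congr1 (horner^~ 0%N)); rewrite hornerD hornerX hornerC horner0.
move=> n; have := norm_exprD_le n le_ab.
by rewrite normX hornerD hornerX hornerC -[(n + 1)%R]/(n + 1)%N addn1.
Qed.

End TemperedMultSeminorm.

Section NonzeroGroup.
Variable R : auraOps.
Hypothesis HR : pt_aura R.

(* The nonzero elements of a positive totally ordered aura form a totally ordered group [G],
   and [R] itself is recovered as [R_G] through [nz_val]. *)
Definition nonzero := {x : R | x <> a0 R}.

Definition nz_mul (x y : nonzero) : nonzero :=
  exist _ (amul (sval x) (sval y)) (amul_neq0 HR (svalP x) (svalP y)).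

Definition nz_inv (x : nonzero) : nonzero :=
  let: exist y xy1 := constructive_indefinite_description _ (amul_inv HR (svalP x)) in
  exist _ y (amul_eq1_neq0r HR xy1).

Definition nonzero_group : groupOps :=
  @GroupOps nonzero (exist _ (a1 R) (a1_neq0 HR)) nz_mul nz_inv
    (fun x y => ale (sval x) (sval y)).

Lemma nz_inj (x y : nonzero) : sval x = sval y -> x = y.
Proof.
by case: x y => [x nz_x] [y nz_y] /= xy; subst y; rewrite (proof_irrelevance _ nz_x nz_y).
Qed.

Lemma nz_mulVx (x : nonzero) : amul (sval (nz_inv x)) (sval x) = a1 R.
Proof.
rewrite /nz_inv; case: constructive_indefinite_description => y xy1 /=.
by rewrite (amulC HR).
Qed.

Lemma nonzero_group_tot_ord : is_tot_ord_group nonzero_group.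
Proof.
split; first by move=> x y z; apply: nz_inj; rewrite /= (amulA HR).
split; first by move=> x y; apply: nz_inj; rewrite /= (amulC HR).
split; first by move=> x; apply: nz_inj; rewrite /= (amul1l HR).
split; first by move=> x; apply: nz_inj; rewrite /= nz_mulVx.
split; first by move=> x; apply: (ale_refl HR).
split; first by move=> x y le_xy le_yx; apply: nz_inj; apply: (ale_anti HR).
split; first by move=> x y z; apply: (ale_trans HR).
split; first by move=> x y; apply: (ale_total HR).
by move=> x y z; apply: (ale_mul2r HR).
Qed.

Definition nz_val (x : RGamma nonzero_group) : R :=
  if x is Some y then sval y else a0 R.

Lemma nz_val_inj : injective nz_val.
Proof.
case=> [x|] [y|] //= xy; first by congr Some; apply: nz_inj.
- by case: (svalP x).
- by case: (svalP y).
Qed.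

Lemma nz_val_le (x y : RGamma nonzero_group) :
  rg_le x y <-> ale (nz_val x) (nz_val y).
Proof.
case: x y => [x|] [y|] /=; split=> //; try by move=> _; apply: (ale0a HR).
by move/(alea0 HR)/(svalP x).
Qed.

Lemma nz_val_mul (x y : RGamma nonzero_group) :
  nz_val (rg_mul x y) = amul (nz_val x) (nz_val y).
Proof. by case: x y => [x|] [y|] //=; rewrite ?(amul0l HR) ?(amul0r HR). Qed.

Variables (A : comPzRingType) (f : A -> R).

Definition nz_part (a : A) : RGamma nonzero_group :=
  match excluded_middle_informative (f a = a0 R) with
  | left _ => None
  | right nz_fa => Some (exist _ (f a) nz_fa)
  end.

Lemma nz_val_part a : nz_val (nz_part a) = f a.
Proof. by rewrite /nz_part; case: excluded_middle_informative. Qed.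

End NonzeroGroup.

Lemma horner1_gt0 (P : {poly nat}) : P != 0 -> (0 < P.[1%N])%N.
Proof.
elim/poly_ind: P => [|P c IHP]; first by rewrite eqxx.
rewrite hornerMXaddC mulr1; have [->|nz_P] := eqVneq P 0.
  by rewrite mul0r !add0r horner0 polyC_eq0 lt0n.
by move=> _; apply: leq_trans (IHP nz_P) (leq_addr _ _).
Qed.

Section RGammaTempered.
Variable G : groupOps.
Hypothesis HG : is_tot_ord_group G.

Lemma rg_addxx (x : RGamma G) : rg_add x x = x.
Proof. by apply: (rg_le_ext HG) => z; rewrite !(rg_add_leP HG); tauto. Qed.

Lemma natR_RGamma k : (0 < k)%N -> natR (RGamma G) k = Some (g1 G).
Proof. by case: k => // k _; elim: k => // k /= ->; rewrite rg_addxx. Qed.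

(* [R_G] is idempotent, so [P(n)] is [1] for every [n] as soon as [P(1) > 0]. *)
Lemma RGamma_tempered : tempered_growth (RGamma G).
Proof.
move=> P x nz_P /(_ 1%N); rewrite natR_RGamma ?horner1_gt0 //.
by case: x => [a|] //=; rewrite gmul1.
Qed.

End RGammaTempered.

Lemma krull_valuation_tempered (A : comPzRingType) (G : groupOps) (v : A -> RGamma G) :
  krull_valuation v -> tempered_mult_seminorm v.
Proof. by case=> HG norm_v mul_v; split=> //; apply: RGamma_tempered. Qed.

Lemma krull_norm2_le1 (A : comPzRingType) (G : groupOps) (v : A -> RGamma G) :
  krull_valuation v -> rg_le (v 2%:R) (Some (g1 G)).
Proof.
case=> HG [_ _ v1 normD _] _; have := normD 1 1.
by rewrite -mulr2n v1 -[aadd _ _]/(rg_add _ _) rg_addxx.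
Qed.

Section MultEquiv.
Variables (A : comPzRingType) (R1 R2 : auraOps) (f1 : A -> R1) (f2 : A -> R2).
Hypotheses (Hf1 : gseminorm f1) (Hf2 : gseminorm f2).

Lemma mult_equiv_le1 a : mult_equiv f1 f2 -> ale (f1 a) (a1 R1) <-> ale (f2 a) (a1 R2).
Proof.
case: Hf1 Hf2 => [HR1 _ f11 _ _] [HR2 _ f21 _ _] /(_ a 1 1).
by rewrite f11 f21 (amul1r HR1) (amul1r HR2).
Qed.

Lemma mult_equivE : Defs.multiplicative f1 -> Defs.multiplicative f2 ->
  seminorm_equiv f1 f2 <-> mult_equiv f1 f2.
Proof.
move=> mul_f1 mul_f2; split=> [equiv_f a b c | equiv_f a b].
  by rewrite -mul_f1 -mul_f2.
case: Hf1 Hf2 (equiv_f a b 1) => [HR1 _ f11 _ _] [HR2 _ f21 _ _].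
by rewrite f11 f21 (amul1r HR1) (amul1r HR2).
Qed.

End MultEquiv.

Section ValuationOfNonarchimedean.
Variables (R : auraOps) (A : comPzRingType) (f : A -> R).
Hypotheses (Hf : tempered_mult_seminorm f) (norm2_le1 : ale (f 2%:R) (a1 R)).
Let HR := seminorm_pt_aura Hf.
Let HG := nonzero_group_tot_ord HR.

Lemma nz_part_valuation : krull_valuation (nz_part HR f).
Proof.
have nz_part_mul a b : nz_part HR f (a * b) = rg_mul (nz_part HR f a) (nz_part HR f b).
  by apply: nz_val_inj; rewrite nz_val_mul !nz_val_part (normM Hf).
split=> //; split=> //; first exact: RGamma_pt_aura.
- by apply: nz_val_inj; rewrite nz_val_part (norm0 Hf).
- by apply: nz_val_inj; rewrite nz_val_part (norm1 Hf).
- move=> a b; change (rg_le (nz_part HR f (a + b))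
                             (rg_add (nz_part HR f a) (nz_part HR f b))).
  wlog le_ab : a b / ale (f a) (f b).
    move=> wlog_ab; have [|le_ba] := ale_total HR (f a) (f b); first exact: wlog_ab.
    by rewrite addrC (rg_addC HG); apply: wlog_ab.
  apply: (rg_le_trans HG (y := nz_part HR f b)); last exact: rg_le_addr.
  by apply/nz_val_le; rewrite !nz_val_part; apply: norm_add_le.
- by move=> a b; rewrite nz_part_mul; apply: (rg_le_refl HG).
Qed.

Lemma nz_part_mult_equiv : mult_equiv f (nz_part HR f).
Proof.
move=> a b c; apply: iff_sym; apply: iff_trans (nz_val_le _ _) _.
by rewrite nz_val_mul !nz_val_part.
Qed.

End ValuationOfNonarchimedean.

Theorem lemma3p6 (A : comPzRingType) :
  (forall (G : groupOps) (v : A -> RGamma G),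
      krull_valuation v -> tempered_mult_seminorm v) /\
  (forall (G1 G2 : groupOps) (v1 : A -> RGamma G1) (v2 : A -> RGamma G2),
      krull_valuation v1 -> krull_valuation v2 ->
      (seminorm_equiv v1 v2 <-> mult_equiv v1 v2)) /\
  (forall (R : auraOps) (f : A -> R), tempered_mult_seminorm f ->
      ((exists (G : groupOps) (v : A -> RGamma G),
           krull_valuation v /\ mult_equiv f v)
         <-> ale (f 2%:R) (a1 R)) /\
      (ale (f 2%:R) (a1 R) <-> (forall n : nat, ale (f n%:R) (a1 R)))).
Proof.
split; first exact: krull_valuation_tempered.
split.
  by move=> G1 G2 v1 v2 [_ norm_v1 mul_v1] [_ norm_v2 mul_v2]; apply: mult_equivE.
move=> R f Hf; split; last by split=> [|]; [apply: norm_natr_le1 | apply].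
split=> [[G [v [val_v equiv_fv]]] | norm2_le1].
  have [_ norm_v _] := val_v; case: Hf => norm_f _ _.
  by apply/(mult_equiv_le1 norm_f norm_v _ equiv_fv); apply: krull_norm2_le1.
exists (nonzero_group (seminorm_pt_aura Hf)), (nz_part (seminorm_pt_aura Hf) f).
by split; [apply: nz_part_valuation | apply: nz_part_mult_equiv].
Qed.
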